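(* Let $\mathsf{K}$ be any class of totally ordered residuated lattices that contains the algebras $\mathbf{A}$, $\mathbf{B}$, $\mathbf{C}$ described in the context. Then $\mathsf{K}$ does not have the one-sided amalgamation property.
   Context: A residuated lattice is an algebra $(L,\wedge,\vee,\cdot,\backslash,/,1)$ where $(L,\wedge,\vee)$ is a lattice, $(L,\cdot,1)$ is a monoid, and $xy\le z \iff y\le x\backslash z \iff x\le z/y$. It is integral if $1$ is the top element; commutative if $\cdot$ is commutative, in which case $x\backslash y=y/x$ is written $x\to y$. In a chain, $x\to y=\max\{z: xz\le y\}$, and in an integral chain $x\to y=1$ whenever $x\le y$. The algebras (all commutative, integral, totally ordered, with $1$ the multiplicative identity and top): - $\mathbf{A}$: universe $u<v<1$, $xy=\min(x,y)$, and $x\to y=1$ if $x\le y$, $x\to y=y$ otherwise. - $\mathbf{B}$: universe $u<b<v<1$, with $v\cdot v=v$, $v\cdot b=b$, $v\cdot u=u$, $b\cdot b=u$, $b\cdot u=u$, $u\cdot u=u$; residuals: $x\to y=1$ if $x\le y$, and $v\to b=b$, $v\to u=u$, $b\to u=b$. - $\mathbf{C}$: universe $u<d<c<v<1$, with $v\cdot v=v$, $v\cdot c=d$, $v\cdot d=d$, $v\cdot u=u$, $c\cdot c=c\cdot d=d\cdot d=u$, and $x\cdot u=u$ for all $x$; residuals: $x\to y=1$ if $x\le y$, and $v\to c=c$, $v\to d=c$, $v\to u=u$, $c\to d=v$, $c\to u=c$, $d\to u=c$. $\mathbf{A}$ is a subalgebra of both $\mathbf{B}$ and $\mathbf{C}$.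 A V-formation in a class $\mathsf{K}$ is a tuple $(\mathbf{P},\mathbf{Q},\mathbf{R},i,j)$ with $\mathbf{P},\mathbf{Q},\mathbf{R}\in\mathsf{K}$ and $i\colon\mathbf{P}\to\mathbf{Q}$, $j\colon\mathbf{P}\to\mathbf{R}$ embeddings. A one-amalgam of it in $\mathsf{K}$ is $(\mathbf{D},h,k)$ with $\mathbf{D}\in\mathsf{K}$, $h\colon\mathbf{Q}\to\mathbf{D}$ a homomorphism, $k\colon\mathbf{R}\to\mathbf{D}$ an embedding, and $h\circ i=k\circ j$. $\mathsf{K}$ has the one-sided amalgamation property (1AP) if every V-formation in $\mathsf{K}$ has a one-amalgam in $\mathsf{K}$. *)

Record RL := mkRL {
  car :> Type;
  meet : car -> car -> car;
  join : car -> car -> car;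
  mul  : car -> car -> car;
  ldiv : car -> car -> car;
  rdiv : car -> car -> car;
  one  : car;
  meetC : forall x y, meet x y = meet y x;
  joinC : forall x y, join x y = join y x;
  meetA : forall x y z, meet x (meet y z) = meet (meet x y) z;
  joinA : forall x y z, join x (join y z) = join (join x y) z;
  meet_join : forall x y, meet x (join x y) = x;
  join_meet : forall x y, join x (meet x y) = x;
  mulA : forall x y z, mul x (mul y z) = mul (mul x y) z;
  mul1x : forall x, mul one x = x;
  mulx1 : forall x, mul x one = x;
  (* residuation: xy <= z <-> y <= x\z <-> x <= z/y, with a <= b := a /\ b = a *)
  resl : forall x y z, meet (mul x y) z = mul x y <-> meet y (ldiv x z) = y;
  resr : forall x y z, meet (mul x y) z = mul x y <-> meet x (rdiv z y) = x
}.

Arguments meet {r}. Arguments join {r}. Arguments mul {r}.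
Arguments ldiv {r}. Arguments rdiv {r}. Arguments one {r}.

Definition rle {L : RL} (x y : L) : Prop := meet x y = x.

Definition is_chain (L : RL) : Prop := forall x y : L, rle x y \/ rle y x.

Definition is_hom {L M : RL} (f : L -> M) : Prop :=
  (forall x y, f (meet x y) = meet (f x) (f y)) /\
  (forall x y, f (join x y) = join (f x) (f y)) /\
  (forall x y, f (mul x y) = mul (f x) (f y)) /\
  (forall x y, f (ldiv x y) = ldiv (f x) (f y)) /\
  (forall x y, f (rdiv x y) = rdiv (f x) (f y)) /\
  f one = one.

Definition is_emb {L M : RL} (f : L -> M) : Prop :=
  is_hom f /\ (forall x y, f x = f y -> x = y).

Definition oneAP (K : RL -> Prop) : Prop :=
  forall (P Q R : RL) (i : P -> Q) (j : P -> R),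
    K P -> K Q -> K R -> is_emb i -> is_emb j ->
    exists (D : RL) (h : Q -> D) (k : R -> D),
      K D /\ is_hom h /\ is_emb k /\ (forall p, h (i p) = k (j p)).

Inductive eA := Au | Av | A1.
Definition rkA (x : eA) : nat := match x with Au => 0 | Av => 1 | A1 => 2 end.
Definition minA (x y : eA) : eA := if Nat.leb (rkA x) (rkA y) then x else y.
Definition maxA (x y : eA) : eA := if Nat.leb (rkA x) (rkA y) then y else x.
Definition impA (x y : eA) : eA := if Nat.leb (rkA x) (rkA y) then A1 else y.

Ltac fin_solve :=
  intros; repeat match goal with x : _ |- _ => destruct x end;
  simpl; try reflexivity; try (split; intro; first [reflexivity | discriminate]).

Definition algA : RL.
Proof.
  refine (mkRL eA minA maxA minA impA (fun z y => impA y z) A1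
    _ _ _ _ _ _ _ _ _ _ _); fin_solve.
Defined.

Inductive eB := Bu | Bb | Bv | B1.
Definition rkB (x : eB) : nat := match x with Bu => 0 | Bb => 1 | Bv => 2 | B1 => 3 end.
Definition minB (x y : eB) : eB := if Nat.leb (rkB x) (rkB y) then x else y.
Definition maxB (x y : eB) : eB := if Nat.leb (rkB x) (rkB y) then y else x.
Definition mulB (x y : eB) : eB :=
  match x, y with
  | B1, z | z, B1 => z
  | Bv, Bv => Bv
  | Bv, Bb | Bb, Bv => Bb
  | _, _ => Bu
  end.
Definition impB (x y : eB) : eB :=
  if Nat.leb (rkB x) (rkB y) then B1 else
  match x, y with
  | Bv, Bb => Bb
  | Bv, Bu => Bu
  | Bb, Bu => Bb
  | _, z => z   (* 1 -> z = z *)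
  end.

Definition algB : RL.
Proof.
  refine (mkRL eB minB maxB mulB impB (fun z y => impB y z) B1
    _ _ _ _ _ _ _ _ _ _ _); fin_solve.
Defined.

Inductive eC := Cu | Cd | Cc | Cv | C1.
Definition rkC (x : eC) : nat :=
  match x with Cu => 0 | Cd => 1 | Cc => 2 | Cv => 3 | C1 => 4 end.
Definition minC (x y : eC) : eC := if Nat.leb (rkC x) (rkC y) then x else y.
Definition maxC (x y : eC) : eC := if Nat.leb (rkC x) (rkC y) then y else x.
Definition mulC (x y : eC) : eC :=
  match x, y with
  | C1, z | z, C1 => z
  | Cu, _ | _, Cu => Cu
  | Cv, Cv => Cv
  | Cv, Cc | Cc, Cv => Cd
  | Cv, Cd | Cd, Cv => Cd
  | _, _ => Cu
  end.
Definition impC (x y : eC) : eC :=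
  if Nat.leb (rkC x) (rkC y) then C1 else
  match x, y with
  | Cv, Cc => Cc
  | Cv, Cd => Cc
  | Cv, Cu => Cu
  | Cc, Cd => Cv
  | Cc, Cu => Cc
  | Cd, Cu => Cc
  | _, z => z   (* 1 -> z = z *)
  end.

Definition algC : RL.
Proof.
  refine (mkRL eC minC maxC mulC impC (fun z y => impC y z) C1
    _ _ _ _ _ _ _ _ _ _ _); fin_solve.
Defined.

From Stdlib Require Import Setoid.

(* Embed A into B and into C by u |-> u, v |-> v, and let (D, h, k) be a
   one-amalgam. Writing u, v, c, d for the images of the elements of C under
   the embedding k, the image x = h b satisfies v x = x and x \ u = x, while
   v c = d < c, d \ u = c and c \ u = c. Compare x with c in the chain D:
   if x <= c then x = v x <= v c = d, so c = d \ u <= x \ u = x <= d;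
   if c <= x then x = x \ u <= c \ u = c, so x = c and c = v c = d.
   Either way c = d, against the injectivity of k. *)

Section ResiduatedOrder.
Variable L : RL.

Lemma rle_refl (x : L) : rle x x.
Proof. unfold rle. rewrite <- (join_meet L x x) at 2. apply meet_join. Qed.

Lemma rle_trans (a b c : L) : rle a b -> rle b c -> rle a c.
Proof. unfold rle; intros Hab Hbc. rewrite <- Hab, <- meetA, Hbc. reflexivity. Qed.

Lemma rle_antisym (a b : L) : rle a b -> rle b a -> a = b.
Proof. unfold rle; intros Hab Hba. rewrite <- Hab, meetC. exact Hba. Qed.

Lemma mul_rle_mul_l (x a b : L) : rle a b -> rle (mul x a) (mul x b).
Proof.
  intro Hab. apply (resl L x a (mul x b)).
  apply (rle_trans _ b); [exact Hab |].
  apply (resl L x b (mul x b)). apply rle_refl.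
Qed.

Lemma mul_rle_mul_r (y a b : L) : rle a b -> rle (mul a y) (mul b y).
Proof.
  intro Hab. apply (resr L a y (mul b y)).
  apply (rle_trans _ b); [exact Hab |].
  apply (resr L b y (mul b y)). apply rle_refl.
Qed.

Lemma ldiv_rle_ldiv (a b z : L) : rle a b -> rle (ldiv b z) (ldiv a z).
Proof.
  intro Hab. apply (resl L a (ldiv b z) z).
  apply (rle_trans _ (mul b (ldiv b z))).
  - apply mul_rle_mul_r. exact Hab.
  - apply (resl L b (ldiv b z) z). apply rle_refl.
Qed.

End ResiduatedOrder.

Section ChainObstruction.
Variables (D : RL) (u v c d x : D).
Hypotheses (vc : mul v c = d) (du : ldiv d u = c) (cu : ldiv c u = c)
  (dc : rle d c) (c_neq_d : c <> d) (vx : mul v x = x) (xu : ldiv x u = x).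

Lemma not_rle_x_c : ~ rle x c.
Proof.
  intro Hxc.
  assert (Hxd : rle x d) by (rewrite <- vx, <- vc; apply mul_rle_mul_l; exact Hxc).
  assert (Hcx : rle c x) by (rewrite <- du, <- xu at 1; apply ldiv_rle_ldiv; exact Hxd).
  apply c_neq_d, rle_antisym; [apply (rle_trans _ _ x) |]; assumption.
Qed.

Lemma not_rle_c_x : ~ rle c x.
Proof.
  intro Hcx.
  assert (Hxc : rle x c) by (rewrite <- cu, <- xu at 1; apply ldiv_rle_ldiv; exact Hcx).
  assert (Exc : x = c) by (apply rle_antisym; assumption).
  apply c_neq_d. rewrite <- vc, <- Exc, vx. reflexivity.
Qed.

Lemma chain_obstruction : ~ is_chain D.
Proof.
  intro Hch. destruct (Hch x c).
  - apply not_rle_x_c; assumption.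
  - apply not_rle_c_x; assumption.
Qed.

End ChainObstruction.

Definition iAB (x : algA) : algB := match x with Au => Bu | Av => Bv | A1 => B1 end.
Definition jAC (x : algA) : algC := match x with Au => Cu | Av => Cv | A1 => C1 end.

Lemma iAB_emb : is_emb iAB.
Proof.
  split; [repeat split |]; intros x y; try intro E; destruct x, y;
  try reflexivity; discriminate.
Qed.

Lemma jAC_emb : is_emb jAC.
Proof.
  split; [repeat split |]; intros x y; try intro E; destruct x, y;
  try reflexivity; discriminate.
Qed.

Theorem mainTheorem3 (K : RL -> Prop) :
  (forall L, K L -> is_chain L) ->
  K algA -> K algB -> K algC ->
  ~ oneAP K.
Proof.
  intros Hch HA HB HC H1AP.
  destruct (H1AP algA algB algC iAB jAC HA HB HC iAB_emb jAC_emb)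
    as [D [h [k [KD [hh [[kh kinj] hik]]]]]].
  destruct hh as [_ [_ [hmul [hldiv _]]]].
  destruct kh as [kmeet [_ [kmul [kldiv _]]]].
  apply (chain_obstruction D (k Cu) (k Cv) (k Cc) (k Cd) (h Bb)); try (apply Hch; exact KD).
  - rewrite <- kmul. reflexivity.
  - rewrite <- kldiv. reflexivity.
  - rewrite <- kldiv. reflexivity.
  - unfold rle. rewrite <- kmeet. reflexivity.
  - intro Ecd. apply kinj in Ecd. discriminate.
  - change (k Cv) with (k (jAC Av)). rewrite <- hik, <- hmul. reflexivity.
  - change (k Cu) with (k (jAC Au)). rewrite <- hik, <- hldiv. reflexivity.
Qed.
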